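(* Let $A,B,\beta,\xi_0>0$ and let $\{w_n\}_{n\ge0}$ be functions $w_n\colon[\xi_0,\infty)\to[0,1]$ with $w_{n+1}(\xi)\le w_n(\xi)$ for all $n,\xi$. Suppose $w_0$ decays rapidly in $\xi$ and that $$w_{n+N}(\xi)\le(1-A\xi^{-\beta})w_n(\xi)\quad\text{for all } n\ge0,\ \xi\ge\xi_0 \text{ and all integers } N>B\log\xi.$$ Then the sequence $s_n=\sup_{\xi\ge\xi_0}w_n(\xi)$ decays rapidly in $n$.
   Context: A function $w\colon D\subseteq(0,\infty)\to\mathbb R$ decays rapidly in $\xi$ if for each $\ell\ge1$ there is $C$ with $|w(\xi)|\le C\xi^{-\ell}$ for all $\xi\in D$. A sequence $\{s_n\}$ decays rapidly in $n$ if for each $\ell\ge1$ there is $C$ with $|s_n|\le Cn^{-\ell}$ for all $n\ge1$. *)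

From Stdlib Require Import Reals.
From Coquelicot Require Import Coquelicot.
Open Scope R_scope.

Definition decays_rapidly_fun (D : R -> Prop) (w : R -> R) : Prop :=
  forall l : nat, (1 <= l)%nat ->
    exists C : R, forall xi : R, D xi -> Rabs (w xi) <= C * / (xi ^ l).

Definition decays_rapidly_seq (s : nat -> R) : Prop :=
  forall l : nat, (1 <= l)%nat ->
    exists C : R, forall n : nat, (1 <= n)%nat -> Rabs (s n) <= C * / (INR n ^ l).

(* sup_{xi >= xi0} f xi, as the real part of Coquelicot's least upper bound
   in the extended reals (finite whenever f is bounded on [xi0,oo)). *)
Definition sup_from (xi0 : R) (f : R -> R) : R :=
  real (Lub_Rbar (fun y => exists xi, xi0 <= xi /\ y = f xi)).

(* Since w_n <= w_0, the rapid decay of w_0 controls w_n(xi) once xi^(2 beta) >= n.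
   For smaller xi write n = u^4: then A xi^(-beta) > A / u^2, and some integer
   N <= c u exceeds B log xi, so applying the contraction floor(n/N) > u^3/c - 1
   times gives w_n(xi) <= exp(A - (A/c) u), which is smaller than any power of
   u, hence of n. *)
From Stdlib Require Import Reals Lra Lia ZArith.
From Coquelicot Require Import Coquelicot.
Open Scope R_scope.

Lemma nat_between (x : R) : 0 <= x -> exists N : nat, x < INR N <= x + 1.
Proof.
  intros hx. destruct (archimed x) as [hup hup1].
  assert (hz : (0 <= up x)%Z) by (apply le_IZR; lra).
  exists (Z.to_nat (up x)). rewrite INR_IZR_INZ, Z2Nat.id by exact hz. lra.
Qed.

Lemma nat_above (x : R) : exists N : nat, x < INR N.
Proof.
  destruct (nat_between (Rabs x) (Rabs_pos x)) as [N [hN _]].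
  exists N. pose proof (Rle_abs x). lra.
Qed.

Lemma INR_lt_mul_div_succ (n N : nat) : N <> 0%nat ->
  INR n < INR N * (INR (n / N) + 1).
Proof.
  intros hN. rewrite <- S_INR, <- mult_INR. apply lt_INR.
  pose proof (Nat.div_mod n N hN). pose proof (Nat.mod_upper_bound n N hN). lia.
Qed.

Lemma ln_lt_id (x : R) : 0 < x -> ln x < x.
Proof. intros hx. pose proof (exp_ineq1_le (ln x)). rewrite exp_ln in H by exact hx. lra. Qed.

Lemma exp_le_compat (x y : R) : x <= y -> exp x <= exp y.
Proof. intros hxy. apply Rnot_lt_le. intros hlt. apply exp_lt_inv in hlt. lra. Qed.

Lemma exp_pow (y : R) (k : nat) : exp y ^ k = exp (INR k * y).
Proof. rewrite <- Rpower_pow by apply exp_pos. unfold Rpower. rewrite ln_exp. reflexivity. Qed.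

Lemma pow_div_le_exp (y : R) (m : nat) : 0 <= y -> (1 <= m)%nat ->
  (y / INR m) ^ m <= exp y.
Proof.
  intros hy hm. assert (hm0 : 0 < INR m) by (apply lt_0_INR; lia).
  replace (exp y) with (exp (y / INR m) ^ m) by (rewrite exp_pow; f_equal; field; lra).
  apply pow_incr. split.
  - apply Rdiv_le_0_compat; lra.
  - pose proof (exp_ineq1_le (y / INR m)). lra.
Qed.

Lemma exp_neg_le_pow_inv (y : R) (m : nat) : 0 < y -> (1 <= m)%nat ->
  exp (- y) <= (INR m / y) ^ m.
Proof.
  intros hy hm. assert (hm0 : 0 < INR m) by (apply lt_0_INR; lia).
  assert (hym : 0 < (y / INR m) ^ m) by (apply pow_lt, Rdiv_lt_0_compat; lra).
  replace ((INR m / y) ^ m) with (/ (y / INR m) ^ m)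
    by (rewrite <- pow_inv; f_equal; field; lra).
  rewrite exp_Ropp. apply Rinv_le_contravar; [exact hym | apply pow_div_le_exp; [lra | exact hm]].
Qed.

Lemma exp_sub_le_pow_inv (A a u : R) (m : nat) : 0 < a -> 0 < u -> (1 <= m)%nat ->
  exp (A - a * u) <= exp A * (INR m / a) ^ m / u ^ m.
Proof.
  intros ha hu hm. assert (hm0 : 0 < INR m) by (apply lt_0_INR; lia).
  unfold Rminus, Rdiv. rewrite exp_plus, Rmult_assoc.
  apply Rmult_le_compat_l; [apply Rlt_le, exp_pos|].
  replace ((INR m * / a) ^ m * / u ^ m) with ((INR m / (a * u)) ^ m)
    by (rewrite <- pow_inv, <- Rpow_mult_distr; f_equal; field; lra).
  apply exp_neg_le_pow_inv; [nra | exact hm].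
Qed.

Lemma div_mul_sub_le_mul_div_sq (A c u t : R) : 0 < A -> 0 < c -> 1 <= u -> 0 <= t ->
  u ^ 3 < c * (t + 1) -> A / c * u - A <= t * (A / u ^ 2).
Proof.
  intros hA hc hu ht hu3. set (r := A / u ^ 2).
  assert (hr0 : 0 < r) by (apply Rdiv_lt_0_compat; [lra | apply pow_lt; lra]).
  assert (hrA : r <= A).
  { unfold r, Rdiv. rewrite <- (Rmult_1_r A) at 2. apply Rmult_le_compat_l; [lra|].
    rewrite <- Rinv_1. apply Rinv_le_contravar; [lra | nra]. }
  assert (hau : A / c * u < r * (t + 1)).
  { replace (A / c * u) with (r * (u ^ 3 / c)) by (unfold r; field; lra).
    apply Rmult_lt_compat_l; [exact hr0|].
    apply (Rmult_lt_reg_l c); [lra|]. replace (c * (u ^ 3 / c)) with (u ^ 3) by (field; lra).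
    exact hu3. }
  nra.
Qed.

Lemma nat_above_ln_below_root (B beta xi u : R) : 0 < B -> 0 < beta -> 1 <= u ->
  Rpower xi beta < u ^ 2 ->
  exists N : nat, (0 < N)%nat /\ B * ln xi < INR N <= (2 * B / beta + 1) * u.
Proof.
  intros hB hbeta hu hxi.
  assert (hBb : 0 < 2 * B / beta) by (apply Rdiv_lt_0_compat; lra).
  assert (hlnu : 0 <= ln u) by (rewrite <- ln_1; apply ln_le; lra).
  pose proof (ln_lt_id u ltac:(lra)).
  assert (hln : ln (Rpower xi beta) < ln (u ^ 2)) by (apply ln_increasing; [apply exp_pos | exact hxi]).
  rewrite ln_Rpower, ln_pow in hln by lra. simpl INR in hln.
  destruct (nat_between (2 * B / beta * ln u)) as [N [hN1 hN2]]; [nra|].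
  exists N. split; [apply (INR_lt 0); simpl; nra | split; [|nra]].
  apply Rle_lt_trans with (2 * B / beta * ln u); [|exact hN1].
  apply (Rmult_le_reg_l beta); [exact hbeta|].
  replace (beta * (2 * B / beta * ln u)) with (B * (2 * ln u)) by (field; lra). nra.
Qed.

Lemma Rpower_ge_1_base (x b : R) : 0 < x -> 0 < b -> 1 <= Rpower x b -> 1 <= x.
Proof.
  intros hx hb hxb. destruct (Rlt_or_le x 1) as [hlt | hge]; [|exact hge].
  pose proof (Rlt_Rpower_l x 1 b hb (conj hx hlt)) as hlt1.
  unfold Rpower at 2 in hlt1. rewrite ln_1, Rmult_0_r, exp_0 in hlt1. lra.
Qed.

Lemma contraction_iter (v : nat -> R) (N : nat) (q : R) : 0 <= q ->
  (forall n, v (n + N)%nat <= q * v n) -> forall k, v (N * k)%nat <= q ^ k * v O.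
Proof.
  intros hq hv k. induction k as [|k IH].
  - rewrite Nat.mul_0_r. simpl. lra.
  - replace (N * S k)%nat with (N * k + N)%nat by lia.
    simpl pow. rewrite Rmult_assoc.
    apply (Rle_trans _ _ _ (hv _)). apply Rmult_le_compat_l; assumption.
Qed.

Lemma decays_rapidly_fun_Rpower (D : R -> Prop) (f : R -> R) (p : R) :
  decays_rapidly_fun D f ->
  exists C, 0 <= C /\ forall xi, D xi -> 1 <= xi -> Rabs (f xi) <= C / Rpower xi p.
Proof.
  intros hf. destruct (nat_above p) as [L hL].
  destruct (hf (S L) ltac:(lia)) as [C hC].
  exists (Rabs C). split; [apply Rabs_pos|]. intros xi hD hxi.
  assert (hp : 0 < Rpower xi p) by apply exp_pos.
  assert (hpL : Rpower xi p <= xi ^ S L).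
  { rewrite <- Rpower_pow by lra. apply Rle_Rpower; [lra|]. rewrite S_INR. lra. }
  assert (hL0 : 0 < / xi ^ S L) by (apply Rinv_0_lt_compat, pow_lt; lra).
  apply (Rle_trans _ _ _ (hC xi hD)).
  apply Rle_trans with (Rabs C * / xi ^ S L).
  - apply Rmult_le_compat_r; [lra | apply Rle_abs].
  - apply Rmult_le_compat_l; [apply Rabs_pos | apply Rinv_le_contravar; assumption].
Qed.

Lemma sup_from_abs_le (xi0 M : R) (f : R -> R) :
  (forall xi, xi0 <= xi -> 0 <= f xi <= M) -> Rabs (sup_from xi0 f) <= M.
Proof.
  intros hf. unfold sup_from.
  set (E := fun y => exists xi, xi0 <= xi /\ y = f xi).
  destruct (Lub_Rbar_correct E) as [hub hleast].
  assert (hle : Rbar_le (Lub_Rbar E) (Finite M)).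
  { apply hleast. intros y [xi [hxi ->]]. apply hf, hxi. }
  assert (hge : Rbar_le (Finite (f xi0)) (Lub_Rbar E)).
  { apply hub. exists xi0. split; [lra | reflexivity]. }
  pose proof (hf xi0 (Rle_refl _)).
  destruct (Lub_Rbar E) as [s | |]; simpl in *; try contradiction.
  rewrite Rabs_pos_eq; lra.
Qed.

Section Contraction.

Context {A B beta xi0 : R} {w : nat -> R -> R}.
Hypotheses (hA : 0 < A) (hB : 0 < B) (hbeta : 0 < beta) (hxi0 : 0 < xi0).
Hypothesis hrange : forall n xi, xi0 <= xi -> 0 <= w n xi <= 1.
Hypothesis hmono : forall n xi, xi0 <= xi -> w (S n) xi <= w n xi.
Hypothesis hw0 : decays_rapidly_fun (fun xi => xi0 <= xi) (w O).
Hypothesis hstep : forall (n N : nat) (xi : R), xi0 <= xi -> B * ln xi < INR N ->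
  w (n + N)%nat xi <= (1 - A * Rpower xi (- beta)) * w n xi.

Lemma w_antitone (m n : nat) (xi : R) : (m <= n)%nat -> xi0 <= xi -> w n xi <= w m xi.
Proof.
  intros hmn hxi. apply (decreasing_prop (fun k => w k xi)); [|exact hmn].
  intros k. apply hmono, hxi.
Qed.

Lemma w_le_exp_floor (n N : nat) (xi : R) : xi0 <= xi -> B * ln xi < INR N ->
  w n xi <= exp (- (INR (n / N) * (A * Rpower xi (- beta)))).
Proof.
  intros hxi hN. set (x := A * Rpower xi (- beta)).
  assert (hcontr : forall k, w (k + N)%nat xi <= exp (- x) * w k xi).
  { intros k. pose proof (hstep k N xi hxi hN) as hs. fold x in hs.
    pose proof (exp_ineq1_le (- x)). pose proof (hrange k xi hxi). nra. }
  pose proof (contraction_iter (fun k => w k xi) N (exp (- x))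
                (Rlt_le _ _ (exp_pos _)) hcontr (n / N)) as hiter; simpl in hiter.
  pose proof (hrange O xi hxi).
  apply Rle_trans with (w (N * (n / N))%nat xi).
  { apply w_antitone; [apply Nat.Div0.mul_div_le | exact hxi]. }
  rewrite exp_pow in hiter. replace (- (INR (n / N) * x)) with (INR (n / N) * - x) by ring.
  pose proof (exp_pos (INR (n / N) * - x)). nra.
Qed.

Lemma w_decay_large_xi (l : nat) : exists C, 0 <= C /\
  forall n xi, (1 <= n)%nat -> xi0 <= xi -> INR n <= Rpower xi beta ^ 2 ->
  w n xi <= C / INR n ^ l.
Proof.
  destruct (decays_rapidly_fun_Rpower _ _ (2 * beta * INR l) hw0) as [C [hC hdec]].
  exists C. split; [exact hC|]. intros n xi hn hxi hlarge.
  assert (hn1 : 1 <= INR n) by (apply (le_INR 1); exact hn).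
  assert (hb : 0 < Rpower xi beta) by apply exp_pos.
  assert (hxi1 : 1 <= xi) by (apply (Rpower_ge_1_base xi beta); nra).
  assert (hpow : INR n ^ l <= Rpower xi (2 * beta * INR l)).
  { replace (2 * beta * INR l) with (beta * INR (2 * l)) by (rewrite mult_INR; simpl; ring).
    rewrite <- Rpower_mult, Rpower_pow, pow_mult by exact hb.
    apply pow_incr. lra. }
  assert (hnl : 0 < INR n ^ l) by (apply pow_lt; lra).
  apply Rle_trans with (w O xi); [apply w_antitone; [lia | exact hxi]|].
  apply (Rle_trans _ _ _ (Rle_abs _)), (Rle_trans _ _ _ (hdec xi hxi hxi1)).
  apply Rmult_le_compat_l; [exact hC | apply Rinv_le_contravar; assumption].
Qed.

Lemma w_decay_small_xi (l : nat) : (1 <= l)%nat -> exists K, 0 <= K /\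
  forall n xi, (1 <= n)%nat -> xi0 <= xi -> Rpower xi beta ^ 2 < INR n ->
  w n xi <= K / INR n ^ l.
Proof.
  intros hl.
  set (c := 2 * B / beta + 1). set (a := A / c). set (m := (4 * l)%nat).
  assert (hc : 1 <= c) by (unfold c; pose proof (Rdiv_lt_0_compat _ _ hB hbeta); lra).
  assert (ha : 0 < a) by (apply Rdiv_lt_0_compat; lra).
  exists (exp A * (INR m / a) ^ m). split.
  { apply Rmult_le_pos; [apply Rlt_le, exp_pos | apply pow_le, Rdiv_le_0_compat; [apply pos_INR | lra]]. }
  intros n xi hn hxi hsmall.
  assert (hn1 : 1 <= INR n) by (apply (le_INR 1); exact hn).
  set (u := Rpower (INR n) (/ 4)).
  assert (hu1 : 1 <= u).
  { rewrite <- (Rpower_O (INR n)) by lra. apply Rle_Rpower; lra. }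
  assert (hu4 : u ^ 4 = INR n).
  { unfold u. rewrite <- Rpower_pow, Rpower_mult by apply exp_pos. simpl INR.
    replace (/ 4 * (1 + 1 + 1 + 1)) with 1 by field. apply Rpower_1; lra. }
  assert (hb : 0 < Rpower xi beta) by apply exp_pos.
  assert (hxb : Rpower xi beta < u ^ 2) by nra.
  destruct (nat_above_ln_below_root B beta xi u hB hbeta hu1 hxb) as [N [hN0 [hNstep hN2]]].
  set (k := (n / N)%nat). fold c in hN2.
  pose proof (INR_lt_mul_div_succ n N ltac:(lia)) as hfloor. fold k in hfloor.
  assert (hu3 : u ^ 3 < c * (INR k + 1)).
  { apply (Rmult_lt_reg_l u); [lra|].
    replace (u * u ^ 3) with (u ^ 4) by ring. rewrite hu4.
    apply (Rlt_le_trans _ _ _ hfloor).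
    replace (u * (c * (INR k + 1))) with (c * u * (INR k + 1)) by ring.
    apply Rmult_le_compat_r; [pose proof (pos_INR k); lra | exact hN2]. }
  assert (hr : A / u ^ 2 <= A * Rpower xi (- beta)).
  { rewrite Rpower_Ropp. apply Rmult_le_compat_l; [lra | apply Rinv_le_contravar; lra]. }
  pose proof (div_mul_sub_le_mul_div_sq A c u (INR k) hA ltac:(lra) hu1 (pos_INR k) hu3) as hexp.
  fold a in hexp.
  apply (Rle_trans _ _ _ (w_le_exp_floor n N xi hxi hNstep)). fold k.
  replace (INR n ^ l) with (u ^ m) by (unfold m; rewrite pow_mult, hu4; reflexivity).
  apply Rle_trans with (exp (A - a * u)).
  { apply exp_le_compat. pose proof (pos_INR k). nra. }
  apply exp_sub_le_pow_inv; [exact ha | lra | unfold m; lia].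
Qed.

End Contraction.

Theorem proposition7p2 (A B beta xi0 : R) (w : nat -> R -> R)
  (hA : 0 < A) (hB : 0 < B) (hbeta : 0 < beta) (hxi0 : 0 < xi0)
  (hrange : forall n xi, xi0 <= xi -> 0 <= w n xi <= 1)
  (hmono : forall n xi, xi0 <= xi -> w (S n) xi <= w n xi)
  (hw0 : decays_rapidly_fun (fun xi => xi0 <= xi) (w O))
  (hstep : forall (n N : nat) (xi : R), xi0 <= xi -> B * ln xi < INR N ->
      w (n + N)%nat xi <= (1 - A * Rpower xi (- beta)) * w n xi) :
  decays_rapidly_seq (fun n => sup_from xi0 (w n)).
Proof.
  intros l hl.
  destruct (w_decay_large_xi hbeta hxi0 hmono hw0 l) as [C [hC hlarge]].
  destruct (w_decay_small_xi hA hB hbeta hrange hmono hstep l hl) as [K [hK hsmall]].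
  exists (C + K). intros n hn.
  assert (hnl : 0 < / INR n ^ l).
  { apply Rinv_0_lt_compat, pow_lt. apply (lt_INR 0); lia. }
  apply sup_from_abs_le. intros xi hxi. split; [apply hrange, hxi|].
  destruct (Rlt_or_le (Rpower xi beta ^ 2) (INR n)) as [hxb | hxb].
  - apply (Rle_trans _ _ _ (hsmall n xi hn hxi hxb)). unfold Rdiv. nra.
  - apply (Rle_trans _ _ _ (hlarge n xi hn hxi hxb)). unfold Rdiv. nra.
Qed.
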